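(* Let $E$ be a topological space, let $\Omega\subseteq E$ be a non-empty relatively compact open set with $\partial\Omega\neq\emptyset$, and let $Y$ be a real locally convex Hausdorff topological vector space. For any continuous function $f:\overline{\Omega}\to Y$, the following are equivalent: (b1) $f$ satisfies the convex hull property in $\overline{\Omega}$, i.e. $f(\Omega)\subseteq\overline{\mathrm{conv}}(f(\partial\Omega))$; (b2) for every continuous and quasi-convex function $\psi:Y\to\mathbf{R}$, one has $\sup_{x\in\Omega}\psi(f(x))=\sup_{x\in\partial\Omega}\psi(f(x))$.
   Context: $\overline{\Omega}$ and $\partial\Omega$ are the closure and boundary of $\Omega$ in $E$; $\overline{\mathrm{conv}}(S)$ is the closed convex hull of $S$. A function $\psi:Y\to\mathbf{R}$ is quasi-convex if for each $r\in\mathbf{R}$ the set $\psi^{-1}(]-\infty,r])$ is convex. *)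

From HB Require Import structures.
From mathcomp Require Import all_boot all_order all_algebra.
From mathcomp Require Import all_classical all_reals all_analysis.
Set Implicit Arguments. Unset Strict Implicit. Unset Printing Implicit Defensive.
Import Order.TTheory GRing.Theory Num.Theory.
Local Open Scope classical_set_scope.
Local Open Scope ring_scope.

Definition boundary (T : topologicalType) (A : set T) : set T :=
  closure A `\` interior A.

Definition conv_hull (R : realType) (Y : tvsType R) (S : set Y) : set Y :=
  \bigcap_(C in [set C : set Y | @convex_set R Y C /\ S `<=` C]) C.

Definition closed_conv_hull (R : realType) (Y : tvsType R) (S : set Y) : set Y :=
  closure (conv_hull S).

Definition quasi_convex (R : realType) (Y : tvsType R) (psi : Y -> R) : Prop :=
  forall r : R, @convex_set R Y [set y : Y | psi y <= r].

From HB Require Import structures.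
From mathcomp Require Import all_boot all_order all_algebra.
From mathcomp Require Import all_classical all_reals all_analysis.
From mathcomp Require Import lra.
Import Order.TTheory GRing.Theory Num.Theory.
Import numFieldNormedType.Exports.
Local Open Scope classical_set_scope.
Local Open Scope ring_scope.

(** (b1) => (b2): the sublevel sets of a continuous quasi-convex [psi] are
    closed and convex, so the one at the supremum over [f(boundary)] contains
    [closed_conv_hull f(boundary)], hence [f(Omega)]; the reverse inequality
    holds because [boundary] lies in [closure Omega] and [psi \o f] is
    continuous there.
    (b2) => (b1): if [f x] is not in the closure of [C := conv f(boundary)],
    some convex open [W] around [0] has [f x - W] disjoint from [C]; the gauge
    [z |-> inf {t > 0 | 1 <= t \/ z \in C + t W}] is then continuous and
    quasi-convex, at most [0] on [C] and at least [1] at [f x], contradicting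
    (b2). *)

Section ConvexHull.
Context {R : realType} {Y : tvsType R}.

Lemma convex_setP (A : set Y) : @convex_set R Y A <->
  (forall x y t, 0 <= t -> t <= 1 -> A x -> A y -> A (t *: x + (1 - t) *: y)).
Proof.
split=> [cA x y t t0 t1 Ax Ay | cA x y l].
  by have := cA x y (Itv01 t0 t1); rewrite !inE; apply.
by rewrite !inE => Ax Ay; exact: (cA x y l%:num (ge0 l) (le1 l) Ax Ay).
Qed.

Lemma conv_hull_convex (K : set Y) : @convex_set R Y (conv_hull K).
Proof.
apply/convex_setP => x y t t0 t1 Kx Ky L LK.
by apply: (proj1 (convex_setP L) LK.1) => //; [apply: Kx | apply: Ky].
Qed.

Lemma sub_conv_hull (K : set Y) : K `<=` conv_hull K.
Proof. by move=> x Kx L [_]; apply. Qed.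

Lemma conv_hull_min (K L : set Y) :
  @convex_set R Y L -> K `<=` L -> conv_hull K `<=` L.
Proof. by move=> cL KL x; apply. Qed.

Lemma closed_conv_hull_min (K L : set Y) :
  closed L -> @convex_set R Y L -> K `<=` L -> closed_conv_hull K `<=` L.
Proof.
move=> /closure_id clL cL KL; rewrite [X in _ `<=` X]clL.
by apply: closureS; exact: conv_hull_min.
Qed.

End ConvexHull.

Section CappedGauge.
Context {R : realType} {Y : tvsType R} (C W : set Y).
Hypotheses (cC : @convex_set R Y C) (cW : @convex_set R Y W) (W0 : W 0).

Let combC := proj1 (convex_setP C) cC.
Let combW := proj1 (convex_setP W) cW.

Definition capped_gauge_set (z : Y) : set R := [set t | 0 < t /\
  (1 <= t \/ exists c w, [/\ C c, W w & z = c + t *: w])].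

Definition capped_gauge (z : Y) : R := inf (capped_gauge_set z).

Lemma capped_gauge_set1 z : capped_gauge_set z 1.
Proof. by split; [exact: ltr01 | left]. Qed.

Lemma capped_gauge_le z t : capped_gauge_set z t -> capped_gauge z <= t.
Proof. by move=> zt; apply: ge_inf zt; exists 0 => s [s0 _]; exact: ltW. Qed.

Lemma capped_gauge_le_eps z r :
  (forall e, 0 < e -> capped_gauge_set z (r + e)) -> capped_gauge z <= r.
Proof. by move=> zr; apply/ler_addgt0Pr => e e0; exact/capped_gauge_le/zr. Qed.

(* Shrinking [w] towards [0] inside [W] shows [C + s W] is contained in [C + t W]
   for [s <= t]. *)
Lemma capped_gauge_set_up z s t :
  capped_gauge_set z s -> s <= t -> capped_gauge_set z t.
Proof.
move=> [s0 [s1|[c [w [Cc Ww ->]]]]] st.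
  by split; [exact: lt_le_trans st | left; exact: le_trans st].
have t0 : 0 < t by exact: lt_le_trans st.
split=> //; right; exists c, ((s / t) *: w + (1 - s / t) *: 0); split=> //.
  apply: combW => //; first by rewrite divr_ge0 // ltW.
  by rewrite ler_pdivrMr // mul1r.
by rewrite scaler0 addr0 scalerA mulrCA divff ?mulr1 // gt_eqF.
Qed.

Lemma capped_gauge_set_lt z r : capped_gauge z < r -> capped_gauge_set z r.
Proof.
move=> /(inf_lt (ex_intro _ 1 (capped_gauge_set1 z))) [t zt tr].
exact: capped_gauge_set_up zt (ltW tr).
Qed.

Lemma capped_gauge_le0 c : C c -> capped_gauge c <= 0.
Proof.
move=> Cc; apply: capped_gauge_le_eps => e e0; rewrite add0r; split=> //; right.
by exists c, 0; split=> //; rewrite scaler0 addr0.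
Qed.

Lemma capped_gauge_ge1 z :
  (forall c w, C c -> W w -> z <> c + w) -> 1 <= capped_gauge z.
Proof.
move=> zCW; apply: lb_le_inf; first by exists 1; exact: capped_gauge_set1.
move=> t [t0 [// | [c [w [Cc Ww ez]]]]].
rewrite leNgt; apply/negP => t1; apply: (zCW c (t *: w)) => //.
have := combW _ _ _ (ltW t0) (ltW t1) Ww W0.
by rewrite scaler0 addr0.
Qed.

Lemma capped_gauge_quasi_convex : quasi_convex capped_gauge.
Proof.
move=> r; apply/convex_setP => z1 z2 t t0 t1 /= z1r z2r.
apply: capped_gauge_le_eps => e e0.
have /capped_gauge_set_lt [re0 [re1|[c1 [w1 [Cc1 Ww1 ->]]]]] :
    capped_gauge z1 < r + e by apply: le_lt_trans z1r _; rewrite ltrDl.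
  by split=> //; left.
have /capped_gauge_set_lt [_ [re1|[c2 [w2 [Cc2 Ww2 ->]]]]] :
    capped_gauge z2 < r + e by apply: le_lt_trans z2r _; rewrite ltrDl.
  by split=> //; left.
split=> //; right.
exists (t *: c1 + (1 - t) *: c2), (t *: w1 + (1 - t) *: w2); split.
- exact: combC.
- exact: combW.
- by rewrite !scalerDr !scalerA (mulrC (r + e) t) (mulrC (r + e) (1 - t)) addrACA.
Qed.

(* [C + s W + e W] is contained in [C + (s + e) W] by convexity of [W]. *)
Lemma capped_gauge_shift_le z v e :
  W v -> 0 < e -> capped_gauge (z + e *: v) <= capped_gauge z + e.
Proof.
move=> Wv e0; apply: capped_gauge_le_eps => d d0.
have /capped_gauge_set_lt : capped_gauge z < capped_gauge z + d by rewrite ltrDl.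
set s := capped_gauge z + d => -[s0 zs].
rewrite addrAC -/s; have se0 : 0 < s + e by exact: addr_gt0.
split=> //; case: zs => [s1|[c [w [Cc Ww ->]]]].
  by left; apply: le_trans s1 _; rewrite lerDl ltW.
have sse : (s + e) * (s / (s + e)) = s by rewrite mulrCA divff ?mulr1 // gt_eqF.
have ese : (s + e) * (1 - s / (s + e)) = e by rewrite mulrBr mulr1 sse addrC addKr.
right; exists c, ((s / (s + e)) *: w + (1 - s / (s + e)) *: v); split=> //.
  apply: combW => //; first by rewrite divr_ge0 // ltW.
  by rewrite ler_pdivrMr // mul1r lerDl ltW.
by rewrite scalerDr !scalerA sse ese addrA.
Qed.

Hypothesis nW : nbhs 0 W.

Lemma capped_gauge_continuous : continuous capped_gauge.
Proof.
move=> z; apply/cvgrPdist_le => e e0.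
have : nbhs z (+%R z @` ( *:%R e @` (W `&` (-%R @` W)))).
  by apply/nbhsT/nbhs0Z; [rewrite gt_eqF | apply: filterI => //; exact: nbhs0N].
apply: filterS => _ [_ [v [Wv [w Ww wv]] <-] <-] /=.
have := capped_gauge_shift_le z _ _ Wv e0.
have := capped_gauge_shift_le (z + e *: v) _ _ Ww e0; rewrite -wv scalerN addrNK.
by rewrite ler_norml; lra.
Qed.

End CappedGauge.

Section QuasiConvexSup.
Context {R : realType} {Y : tvsType R}.

Lemma ereal_sup_le_closed_conv_hull (psi : Y -> R) (A K : set Y) :
  continuous psi -> quasi_convex psi -> A `<=` closed_conv_hull K ->
  (ereal_sup [set (psi y)%:E | y in A] <= ereal_sup [set (psi k)%:E | k in K])%E.
Proof.
move=> cpsi qpsi AK; apply/ereal_supP => _ [y Ay <-].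
have below r : (ereal_sup [set (psi k)%:E | k in K] <= r%:E)%E -> psi y <= r.
  move=> /ereal_supP Kr; apply: (closed_conv_hull_min K _ _ (qpsi r)) (AK y Ay).
    by have := proj1 (continuous_closedP psi) cpsi _ (@closed_le _ r).
  by move=> k Kk; rewrite /= -lee_fin; apply: Kr; exists k.
move: below; case: ereal_sup => [s | | ] below.
- by rewrite lee_fin; apply: below.
- by rewrite leey.
- by have := below (psi y - 1) (leNye _); rewrite lerDl oppr_ge0 ler10.
Qed.

Lemma closed_conv_hull_separation (K : set Y) (y : Y) :
  ~ closed_conv_hull K y -> exists psi : Y -> R,
    [/\ continuous psi, quasi_convex psi, 1 <= psi y & forall k, K k -> psi k <= 0].
Proof.
move=> Ky.
have [B yB BK] : exists2 B, nbhs y B & forall c, conv_hull K c -> ~ B c.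
  apply: contrapT => noB; apply: Ky => B yB; apply: contrapT => KB.
  by apply: noB; exists B => // c Kc Bc; apply: KB; exists c.
have yBN : nbhs 0 (-%R @` (+%R (- y) @` B)).
  by apply: nbhs0N; rewrite -(addNr y); exact: nbhsB.
have [Bs cvxB [openB basisB]] := @locally_convex R Y.
have [W [BW W0] WB] := basisB 0 _ yBN.
have nW : nbhs 0 W by apply: open_nbhs_nbhs; split=> //; exact: openB.
have cW : @convex_set R Y W by apply: cvxB; rewrite inE.
exists (capped_gauge (conv_hull K) W); split.
- exact: capped_gauge_continuous.
- exact: capped_gauge_quasi_convex (conv_hull_convex K) cW W0.
- apply: capped_gauge_ge1 => // c w Kc Ww ycw; apply: (BK c Kc).
  have [_ [b Bb <-] wb] := WB _ Ww.
  by rewrite -(addrK w c) -ycw -wb opprK addNKr.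
- by move=> k /(sub_conv_hull K); exact: capped_gauge_le0.
Qed.

End QuasiConvexSup.

Lemma ereal_sup_closure {T : topologicalType} {R : realType} (A : set T) (g : T -> R) :
  {within closure A, continuous g} ->
  ereal_sup [set (g x)%:E | x in closure A] = ereal_sup [set (g x)%:E | x in A].
Proof.
move=> cg; apply: le_anti; apply/andP; split; last first.
  by apply/ereal_sup_le/image_subset; exact: subset_closure.
apply/ereal_supP => _ [x Ax <-]; apply/lee_subgt0Pr => e e0.
have : within (closure A) (nbhs x) [set z | `|g x - g z| < e].
  by rewrite (nbhs_subspace_in Ax); move/cvgrPdist_lt: (cg x); apply.
move=> /Ax [z [Az /(_ (subset_closure Az))]] /=; rewrite ltr_distlC => /andP[xz _].
rewrite -EFinB; apply: (@le_trans _ _ (g z)%:E); first by rewrite lee_fin ltW.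
by apply: ereal_sup_ubound; exists z.
Qed.

Theorem proposition2 (R : realType) (E : topologicalType) (Y : tvsType R)
  (Omega : set E) (f : E -> Y) :
  Omega !=set0 -> open Omega -> compact (closure Omega) ->
  boundary Omega !=set0 -> hausdorff_space Y ->
  {within closure Omega, continuous f} ->
  (f @` Omega `<=` closed_conv_hull (f @` boundary Omega) <->
   (forall psi : Y -> R, continuous psi -> quasi_convex psi ->
      ereal_sup [set (psi (f x))%:E | x in Omega] =
      ereal_sup [set (psi (f x))%:E | x in boundary Omega])).
Proof.
move=> _ _ _ _ _ cf; split=> [hull psi cpsi qpsi | sups _ [x Ox <-]].
  apply: le_anti; apply/andP; split.
    by have := ereal_sup_le_closed_conv_hull _ _ _ cpsi qpsi hull; rewrite !image_comp.
  have cpsif : {within closure Omega, continuous (psi \o f)}.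
    by apply: within_continuous_comp cf => y _; exact: cpsi.
  rewrite -(ereal_sup_closure _ _ cpsif).
  by apply/ereal_sup_le/image_subset => y [].
apply: contrapT => /closed_conv_hull_separation [psi [cpsi qpsi psi1 psiB]].
have supB : (ereal_sup [set (psi (f x))%:E | x in boundary Omega] <= 0%:E)%E.
  by apply/ereal_supP => _ [b Bb <-]; rewrite lee_fin psiB //; exists b.
have : psi (f x) <= 0.
  rewrite -lee_fin (le_trans _ supB) // -sups //.
  by apply: ereal_sup_ubound; exists x.
lra.
Qed.
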